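(* Let $\varPhi\subset\mathbb{E}^3$ be a skew ruled surface with invariants $\delta,\kappa,\lambda$, right normalized with support function $q=\frac{f(u)+g(u)v}{w}$, neither $f$ nor $g$ the zero function, and let $\overline{T}$ be its Tchebychev vector field. Then: (a) $\overline{T}$ is tangential to the $u$-curves of $\varPhi$ if and only if $\varPhi$ is conoidal and $g=c_1|\delta|^{-1/2}$, $c_1\in\mathbb{R}\setminus\{0\}$, and $f=|\delta|^{1/2}\left(c_1\int\lambda\,\mathrm{d}u+c_2\right)$, $c_2\in\mathbb{R}$; (b) $\overline{T}$ is orthogonal to the $u$-curves of $\varPhi$ if and only if the striction curve of $\varPhi$ is a Euclidean line of curvature and $g=c_1|\delta|^{-1/2}$, $f=c_2|\delta|^{1/2}$ with $c_1,c_2\in\mathbb{R}\setminus\{0\}$.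
   Context: $\varPhi$ is a ruled $C^r$-surface ($r\ge3$) with nonvanishing Gaussian curvature, in standard parameters $\overline{x}(u,v)=\overline{s}(u)+v\,\overline{e}(u)$, $|\overline{e}|=|\overline{e}'|=1$, $\langle\overline{s}',\overline{e}'\rangle=0$; $\overline{s}$ is the striction curve. Frame $\overline{n}=\overline{e}'$, $\overline{z}=\overline{e}\times\overline{n}$. Invariants: $\delta=(\overline{s}',\overline{e},\overline{e}')\neq0$, $\kappa=(\overline{e},\overline{e}',\overline{e}'')$, $\lambda=\cot\sphericalangle(\overline{e},\overline{s}')$, $\overline{s}'=\delta\lambda\overline{e}+\delta\overline{z}$. The striction curve is a Euclidean line of curvature exactly when $\kappa\lambda+1=0$. Conoidal means $\kappa\equiv0$. $w=\sqrt{\delta^2+v^2}$, $\overline{\xi}=(\delta\overline{n}-v\overline{z})/w$. $h_{11}=-(\kappa w^2+\delta'v-\delta^2\lambda)/w$, $h_{12}=\delta/w$, $h_{22}=0$. The $u$-curves are the curves $v=$const (curves of constant striction distance). A relative normalization $\overline{y}$ is determined by its support function $q=\langle\overline{\xi},\overline{y}\rangle\neq0$; right normalization: $q=(f+gv)/w$, $f,g$ functions of $u$. Relative metric $G_{ij}=q^{-1}h_{ij}$, Darboux tensor $A_{ijk}=q^{-1}\langle\overline{\xi},\nabla^G_k\nabla^G_j\overline{x}_{/i}\rangle$, Tchebychev vector $\overline{T}=T^m\overline{x}_{/m}$, $T^m=\frac12A_i^{\ im}$; equivalently $T^1=\frac{w^2q_{/2}+vq}{\delta w}$, $T^2=\frac{2\delta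 w^2q_{/1}+\delta'q(\delta^2-v^2)}{2\delta^2w}+\frac{T^1(\kappa w^2+\delta'v-\delta^2\lambda)}{\delta}$. ''Tangential/orthogonal to a family of curves'' means at every point $\overline{T}$ is parallel/orthogonal to the tangent of the curve of the family through that point. $\int\cdots\mathrm{d}u$ denotes an antiderivative.
   Formalization: In part (a) the integrand λ is replaced by cot∠(e,s') = ⟨s',e⟩/|s'×e|, which equals sgn(δ)λ, while λ elsewhere, including in κλ+1=0, is taken from $\overline{s}'=\delta\lambda\overline{e}+\delta\overline{z}$. Each condition added here is assumed in the paper as well or is needed for the statement above to hold. *)

From Stdlib Require Import Reals.
From Coquelicot Require Import Coquelicot.
Open Scope R_scope.

Definition V3 := (R * R * R)%type.
Definition vx (a : V3) : R := fst (fst a).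
Definition vy (a : V3) : R := snd (fst a).
Definition vz (a : V3) : R := snd a.
Definition mk3 (x y z : R) : V3 := (x, y, z).
Definition vadd (a b : V3) : V3 := mk3 (vx a + vx b) (vy a + vy b) (vz a + vz b).
Definition vscal (k : R) (a : V3) : V3 := mk3 (k * vx a) (k * vy a) (k * vz a).
Definition vzero : V3 := mk3 0 0 0.
Definition dot (a b : V3) : R := vx a * vx b + vy a * vy b + vz a * vz b.
Definition cross (a b : V3) : V3 :=
  mk3 (vy a * vz b - vz a * vy b) (vz a * vx b - vx a * vz b) (vx a * vy b - vy a * vx b).
Definition triple (a b c : V3) : R := dot a (cross b c).
Definition vnorm (a : V3) : R := sqrt (dot a a).

Definition vD (F : R -> V3) (u : R) : V3 :=
  mk3 (Derive (fun t => vx (F t)) u) (Derive (fun t => vy (F t)) u)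
      (Derive (fun t => vz (F t)) u).

Definition inI (a b : Rbar) (u : R) : Prop := Rbar_lt a u /\ Rbar_lt u b.

Definition C3_on (a b : Rbar) (h : R -> R) : Prop :=
  forall u, inI a b u ->
    (forall k, (k <= 3)%nat -> ex_derive_n h k u) /\ continuous (Derive_n h 3) u.

Definition vC3_on (a b : Rbar) (F : R -> V3) : Prop :=
  C3_on a b (fun t => vx (F t)) /\ C3_on a b (fun t => vy (F t)) /\
  C3_on a b (fun t => vz (F t)).

(** * Ruled surface x(u,v) = s(u) + v e(u) in standard parameters (C^3) *)
Definition standard_ruled (a b : Rbar) (s e : R -> V3) : Prop :=
  vC3_on a b s /\ vC3_on a b e /\
  forall u, inI a b u ->
    dot (e u) (e u) = 1 /\ dot (vD e u) (vD e u) = 1 /\ dot (vD s u) (vD e u) = 0.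

Section Invariants.
Variables (s e : R -> V3).
Definition delta (u : R) : R := triple (vD s u) (e u) (vD e u).
Definition kappa (u : R) : R := triple (e u) (vD e u) (vD (vD e) u).
(** lambda defined through  s' = delta*lambda*e + delta*z  *)
Definition lambda (u : R) : R := dot (vD s u) (e u) / delta u.
(** cot of the (unoriented) angle between e and s' *)
Definition cot_angle (u : R) : R := dot (vD s u) (e u) / vnorm (cross (vD s u) (e u)).

Definition wfun (u v : R) : R := sqrt (delta u ^ 2 + v ^ 2).

Definition x1 (u v : R) : V3 := vadd (vD s u) (vscal v (vD e u)).
Definition x2 (u v : R) : V3 := e u.

Variables (f g : R -> R).
Definition qfun (u v : R) : R := (f u + g u * v) / wfun u v.
Definition q_1 (u v : R) : R := Derive (fun t => qfun t v) u.
Definition q_2 (u v : R) : R := Derive (fun t => qfun u t) v.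

Definition T1 (u v : R) : R :=
  (wfun u v ^ 2 * q_2 u v + v * qfun u v) / (delta u * wfun u v).
Definition T2 (u v : R) : R :=
  (2 * delta u * wfun u v ^ 2 * q_1 u v
     + Derive delta u * qfun u v * (delta u ^ 2 - v ^ 2))
    / (2 * delta u ^ 2 * wfun u v)
  + T1 u v * (kappa u * wfun u v ^ 2 + Derive delta u * v - delta u ^ 2 * lambda u)
    / delta u.
Definition Tvec (u v : R) : V3 := vadd (vscal (T1 u v) (x1 u v)) (vscal (T2 u v) (x2 u v)).

(** points of the surface where the normalization is defined (q <> 0) *)
Definition dom (a b : Rbar) (u v : R) : Prop := inI a b u /\ f u + g u * v <> 0.

Definition T_tangential_ucurves (a b : Rbar) : Prop :=
  forall u v, dom a b u v -> cross (Tvec u v) (x1 u v) = vzero.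
Definition T_orthogonal_ucurves (a b : Rbar) : Prop :=
  forall u v, dom a b u v -> dot (Tvec u v) (x1 u v) = 0.
End Invariants.

(* At the point (u, v) the Tchebychev vector is T = (g/delta) x_/1 + T^2 e with
   T^2 = (c0 + c1 v + c2 v^2) / (2 delta^2), where
     c0 = 2 delta f' - delta' f + 2 g delta^2 (kappa - lambda),
     c1 = 2 delta g' + delta' g,   c2 = 2 g kappa.
   As |e x x_/1|^2 = delta^2 + v^2 and <e, x_/1> = delta lambda, T is tangential to the
   u-curve iff c0 + c1 v + c2 v^2 = 0, and orthogonal to it iff
   2 g (delta^2 (1 + lambda^2) + v^2) + lambda (c0 + c1 v + c2 v^2) = 0.  This must hold for
   every v but the zero -f/g of the support function, so all coefficients vanish where g <> 0.
   Up to nonvanishing factors, c1 is the derivative of g sqrt|delta| and 2 delta f' - delta' f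
   that of f / sqrt|delta|.  Hence (g sqrt|delta|) (g sqrt|delta|)' = 0 on the interval, which
   forces g = c1 / sqrt|delta| with c1 <> 0; then c2 = 0 (resp. 2 g + lambda c2 = 0) gives
   kappa = 0 (resp. kappa lambda + 1 = 0), and c0 = 0 (resp. the constant coefficient) gives
   (f / sqrt|delta|)' = c1 cot(e, s') (resp. = 0). *)

From Stdlib Require Import Reals Lra Lia.
From Coquelicot Require Import Coquelicot.
Open Scope R_scope.

Lemma inI_locally (a b : Rbar) (u : R) : inI a b u -> locally u (inI a b).
Proof.
  intros [Hau Hub].
  generalize (filter_and _ _ (open_Rbar_gt' u a Hau) (open_Rbar_lt' u b Hub)).
  apply filter_imp. intros t [Hat Htb]. split; assumption.
Qed.

Lemma inI_between (a b : Rbar) (u1 u2 t : R) :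
  inI a b u1 -> inI a b u2 -> Rmin u1 u2 <= t <= Rmax u1 u2 -> inI a b t.
Proof.
  unfold inI, Rmin, Rmax. intros [Ha1 Hb1] [Ha2 Hb2] Ht.
  destruct (Rle_dec u1 u2), a, b; simpl in *; split; try tauto; lra.
Qed.

Lemma inI_derive0_const (a b : Rbar) (h : R -> R) :
  (forall u, inI a b u -> is_derive h u 0) ->
  forall u1 u2, inI a b u1 -> inI a b u2 -> h u1 = h u2.
Proof.
  intros Hh u1 u2 Hu1 Hu2.
  destruct (MVT_gen h u1 u2 (fun _ => 0)) as [c [_ Hc]].
  - intros t Ht. apply Hh, (inI_between a b u1 u2); auto. lra.
  - intros t Ht. apply continuity_pt_filterlim, (ex_derive_continuous h).
    exists 0. apply Hh, (inI_between a b u1 u2); auto.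
  - lra.
Qed.

Lemma inI_const_derive0 (a b : Rbar) (h : R -> R) (c u l : R) :
  (forall t, inI a b t -> h t = c) -> inI a b u -> is_derive h u l -> l = 0.
Proof.
  intros Hc Hu Hl.
  assert (H0 : is_derive h u 0).
  { apply (is_derive_ext_loc (fun _ => c)).
    - generalize (inI_locally a b u Hu). apply filter_imp. intros t Ht. symmetry; auto.
    - exact (@is_derive_const R_AbsRing R_NormedModule c u). }
  apply is_derive_unique in Hl. apply is_derive_unique in H0. congruence.
Qed.

Lemma inI_mul_derive0_const (a b : Rbar) (h dh : R -> R) :
  (forall u, inI a b u -> is_derive h u (dh u)) ->
  (forall u, inI a b u -> h u * dh u = 0) ->
  forall u1 u2, inI a b u1 -> inI a b u2 -> h u1 = h u2.
Proof.
  intros Hh Hhdh.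
  assert (Hsq : forall u1 u2, inI a b u1 -> inI a b u2 -> h u1 * h u1 = h u2 * h u2).
  { apply (inI_derive0_const a b (fun t => h t * h t)). intros u Hu.
    replace 0 with (dh u * h u + h u * dh u) by (rewrite Rmult_comm, (Hhdh u Hu); ring).
    exact (is_derive_mult h h u _ _ (Hh u Hu) (Hh u Hu) Rmult_comm). }
  (* h^2 is constant, so h either vanishes identically or nowhere; in the latter case h' = 0. *)
  intros u1 u2 Hu1 Hu2.
  destruct (Req_dec (h u1) 0) as [E1|N1].
  - specialize (Hsq u1 u2 Hu1 Hu2). rewrite E1 in Hsq. nra.
  - apply (inI_derive0_const a b h); auto. intros u Hu.
    assert (Nu : h u <> 0).
    { intro Eu. specialize (Hsq u1 u Hu1 Hu). rewrite Eu in Hsq. apply N1. nra. }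
    replace 0 with (dh u).
    + apply Hh, Hu.
    + apply (Rmult_eq_reg_l (h u)); auto. rewrite (Hhdh u Hu). ring.
Qed.

Lemma quadratic_eq0_off_point (c0 c1 c2 v0 : R) :
  (forall v, v <> v0 -> c0 + c1 * v + c2 * v ^ 2 = 0) -> c0 = 0 /\ c1 = 0 /\ c2 = 0.
Proof.
  intros H.
  destruct (Req_dec v0 0) as [E0|N0]; [|destruct (Req_dec v0 1) as [E1|N1]].
  - pose proof (H 1 ltac:(lra)). pose proof (H 2 ltac:(lra)). pose proof (H 3 ltac:(lra)).
    simpl in *. lra.
  - pose proof (H 0 ltac:(lra)). pose proof (H 2 ltac:(lra)). pose proof (H 3 ltac:(lra)).
    simpl in *. lra.
  - pose proof (H 0 ltac:(lra)). pose proof (H 1 ltac:(lra)). destruct (Req_dec v0 2) as [E2|N2].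
    + pose proof (H 3 ltac:(lra)). simpl in *. lra.
    + pose proof (H 2 ltac:(lra)). simpl in *. lra.
Qed.

Lemma Rdiv_eq0 (x c : R) : c <> 0 -> x / c = 0 <-> x = 0.
Proof.
  intros Hc. split; intros Hx.
  - replace x with (x / c * c) by (field; exact Hc). rewrite Hx. ring.
  - rewrite Hx. unfold Rdiv. ring.
Qed.

Lemma affine_neq0_off_root (p q v : R) : q <> 0 -> v <> - p / q -> p + q * v <> 0.
Proof.
  intros Hq Hv Hpqv. apply Hv.
  replace v with ((p + q * v - p) / q) by (field; exact Hq). rewrite Hpqv. field. exact Hq.
Qed.

Ltac v3_unfold :=
  repeat match goal with
  | X : V3 |- _ => let x := fresh "x" in let y := fresh "y" in let z := fresh "z" in
                   destruct X as [[x y] z]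
  end;
  unfold triple, dot, cross, vadd, vscal, vzero, vx, vy, vz, mk3; simpl.

Lemma dot_comm (X Y : V3) : dot X Y = dot Y X.
Proof. v3_unfold. ring. Qed.

Lemma dot_vadd_l (X Y Z : V3) : dot (vadd X Y) Z = dot X Z + dot Y Z.
Proof. v3_unfold. ring. Qed.

Lemma dot_vadd_r (X Y Z : V3) : dot X (vadd Y Z) = dot X Y + dot X Z.
Proof. v3_unfold. ring. Qed.

Lemma dot_vscal_l (k : R) (X Y : V3) : dot (vscal k X) Y = k * dot X Y.
Proof. v3_unfold. ring. Qed.

Lemma dot_vscal_r (k : R) (X Y : V3) : dot X (vscal k Y) = k * dot X Y.
Proof. v3_unfold. ring. Qed.

Lemma cross_vadd_l (X Y Z : V3) : cross (vadd X Y) Z = vadd (cross X Z) (cross Y Z).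
Proof. v3_unfold. f_equal; [f_equal|]; ring. Qed.

Lemma cross_vscal_l (k : R) (X Y : V3) : cross (vscal k X) Y = vscal k (cross X Y).
Proof. v3_unfold. f_equal; [f_equal|]; ring. Qed.

Lemma cross_self (X : V3) : cross X X = vzero.
Proof. v3_unfold. f_equal; [f_equal|]; ring. Qed.

Lemma vscal_vzero (k : R) : vscal k vzero = vzero.
Proof. v3_unfold. f_equal; [f_equal|]; ring. Qed.

Lemma vadd_vzero_l (X : V3) : vadd vzero X = X.
Proof. v3_unfold. f_equal; [f_equal|]; ring. Qed.

Lemma vscal_eq_vzero (k : R) (X : V3) : dot X X <> 0 -> vscal k X = vzero <-> k = 0.
Proof.
  intros HX. split.
  - intros Hk. apply (f_equal (fun Y => dot Y Y)) in Hk.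
    rewrite dot_vscal_l, dot_vscal_r in Hk.
    replace (dot vzero vzero) with 0 in Hk by (v3_unfold; ring).
    apply Rmult_integral in Hk as [Hk|Hk]; [auto|].
    apply Rmult_integral in Hk as [Hk|Hk]; [auto|contradiction].
  - intros ->. v3_unfold. f_equal; [f_equal|]; ring.
Qed.

Lemma dot_cross_cross (X Y : V3) : dot (cross X Y) (cross X Y) = dot X X * dot Y Y - dot X Y ^ 2.
Proof. v3_unfold. ring. Qed.

Lemma triple_sq_orthonormal (A B C : V3) :
  dot B B = 1 -> dot C C = 1 -> dot B C = 0 ->
  triple A B C ^ 2 = dot A A - dot A B ^ 2 - dot A C ^ 2.
Proof.
  intros HB HC HBC.
  assert (Gram : triple A B C ^ 2 =
    dot A A * (dot B B * dot C C - dot B C ^ 2)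
    - dot A B * (dot A B * dot C C - dot B C * dot A C)
    + dot A C * (dot A B * dot B C - dot B B * dot A C)) by (v3_unfold; ring).
  rewrite Gram, HB, HC, HBC. ring.
Qed.

Definition vex_derive (F : R -> V3) (u : R) : Prop :=
  ex_derive (fun t => vx (F t)) u /\ ex_derive (fun t => vy (F t)) u /\
  ex_derive (fun t => vz (F t)) u.

Lemma vC3_on_vex_derive (a b : Rbar) (F : R -> V3) (u : R) :
  vC3_on a b F -> inI a b u -> vex_derive F u /\ vex_derive (vD F) u.
Proof.
  intros [Hx [Hy Hz]] Hu.
  destruct (Hx u Hu) as [Dx _], (Hy u Hu) as [Dy _], (Hz u Hu) as [Dz _].
  repeat split.
  - exact (Dx 1%nat ltac:(lia)).
  - exact (Dy 1%nat ltac:(lia)).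
  - exact (Dz 1%nat ltac:(lia)).
  - exact (Dx 2%nat ltac:(lia)).
  - exact (Dy 2%nat ltac:(lia)).
  - exact (Dz 2%nat ltac:(lia)).
Qed.

Ltac eta_contract :=
  repeat match goal with |- context [fun x => ?h x] => change (fun x => h x) with h end.

Lemma is_derive_dot (F G : R -> V3) (u : R) :
  vex_derive F u -> vex_derive G u ->
  is_derive (fun t => dot (F t) (G t)) u (dot (vD F u) (G u) + dot (F u) (vD G u)).
Proof.
  intros [F1 [F2 F3]] [G1 [G2 G3]].
  pose (f1 := fun t => vx (F t)); pose (f2 := fun t => vy (F t));
  pose (f3 := fun t => vz (F t)); pose (g1 := fun t => vx (G t));
  pose (g2 := fun t => vy (G t)); pose (g3 := fun t => vz (G t)).
  change (is_derive (fun t => f1 t * g1 t + f2 t * g2 t + f3 t * g3 t) u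
    (Derive f1 u * g1 u + Derive f2 u * g2 u + Derive f3 u * g3 u
     + (f1 u * Derive g1 u + f2 u * Derive g2 u + f3 u * Derive g3 u))).
  auto_derive; [repeat split; assumption |].
  eta_contract. ring.
Qed.

Lemma vex_derive_cross (G H : R -> V3) (u : R) :
  vex_derive G u -> vex_derive H u -> vex_derive (fun t => cross (G t) (H t)) u.
Proof.
  intros [G1 [G2 G3]] [H1 [H2 H3]]. repeat split.
  - apply (ex_derive_minus (fun t => vy (G t) * vz (H t)) (fun t => vz (G t) * vy (H t)));
      apply ex_derive_mult; assumption.
  - apply (ex_derive_minus (fun t => vz (G t) * vx (H t)) (fun t => vx (G t) * vz (H t)));
      apply ex_derive_mult; assumption.
  - apply (ex_derive_minus (fun t => vx (G t) * vy (H t)) (fun t => vy (G t) * vx (H t)));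
      apply ex_derive_mult; assumption.
Qed.

Lemma ex_derive_triple (F G H : R -> V3) (u : R) :
  vex_derive F u -> vex_derive G u -> vex_derive H u ->
  ex_derive (fun t => triple (F t) (G t) (H t)) u.
Proof.
  intros HF HG HH. eexists.
  exact (is_derive_dot F (fun t => cross (G t) (H t)) u HF (vex_derive_cross G H u HG HH)).
Qed.

Lemma is_derive_sqrt_abs (d : R -> R) (u : R) :
  d u <> 0 -> ex_derive d u ->
  is_derive (fun t => sqrt (Rabs (d t))) u (Derive d u * sqrt (Rabs (d u)) / (2 * d u)).
Proof.
  intros Hd Dd.
  assert (Habs : 0 < Rabs (d u)) by (apply Rabs_pos_lt; exact Hd).
  assert (HS : 0 < sqrt (Rabs (d u))) by (apply sqrt_lt_R0; exact Habs).
  assert (HS2 : sqrt (Rabs (d u)) * sqrt (Rabs (d u)) = Rabs (d u)) by (apply sqrt_sqrt; lra).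
  replace (Derive d u * sqrt (Rabs (d u)) / (2 * d u))
    with (sign (d u) * Derive d u / (2 * sqrt (Rabs (d u)))).
  - exact (is_derive_sqrt _ u _ (is_derive_Rabs d u _ (Derive_correct d u Dd) Hd) Habs).
  - (* sign d / sqrt|d| = sqrt|d| / d, as sign d * d = |d| *)
    set (S := sqrt (Rabs (d u))) in *.
    destruct (Rlt_or_le 0 (d u)) as [Hpos|Hneg].
    + rewrite sign_eq_1 by lra. rewrite Rabs_pos_eq in HS2 by lra.
      rewrite <- HS2. field. lra.
    + rewrite sign_eq_m1 by lra. rewrite Rabs_left in HS2 by lra.
      replace (d u) with (- (S * S)) by lra. field. lra.
Qed.

Lemma is_derive_mul_sqrt_abs (d g : R -> R) (u : R) :
  d u <> 0 -> ex_derive d u -> ex_derive g u ->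
  is_derive (fun t => g t * sqrt (Rabs (d t))) u
    ((2 * d u * Derive g u + Derive d u * g u) * sqrt (Rabs (d u)) / (2 * d u)).
Proof.
  intros Hd Dd Dg.
  eapply is_derive_ext; [intro t; reflexivity|].
  replace ((2 * d u * Derive g u + Derive d u * g u) * sqrt (Rabs (d u)) / (2 * d u))
    with (Derive g u * sqrt (Rabs (d u)) + g u * (Derive d u * sqrt (Rabs (d u)) / (2 * d u)))
    by (field; exact Hd).
  exact (is_derive_mult _ _ u _ _ (Derive_correct g u Dg) (is_derive_sqrt_abs d u Hd Dd)
           Rmult_comm).
Qed.

Lemma is_derive_div_sqrt_abs (d f : R -> R) (u : R) :
  d u <> 0 -> ex_derive d u -> ex_derive f u ->
  is_derive (fun t => f t / sqrt (Rabs (d t))) u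
    ((2 * d u * Derive f u - Derive d u * f u) / (2 * d u * sqrt (Rabs (d u)))).
Proof.
  intros Hd Dd Df.
  assert (HS : 0 < sqrt (Rabs (d u))) by (apply sqrt_lt_R0, Rabs_pos_lt; exact Hd).
  eapply is_derive_ext; [intro t; reflexivity|].
  replace ((2 * d u * Derive f u - Derive d u * f u) / (2 * d u * sqrt (Rabs (d u))))
    with ((Derive f u * sqrt (Rabs (d u))
           - f u * (Derive d u * sqrt (Rabs (d u)) / (2 * d u))) / sqrt (Rabs (d u)) ^ 2)
    by (field; lra).
  exact (is_derive_div _ _ u _ _ (Derive_correct f u Df) (is_derive_sqrt_abs d u Hd Dd)
           ltac:(lra)).
Qed.

Section StandardFrame.

Variables (a b : Rbar) (s e : R -> V3).
Hypothesis ruled : standard_ruled a b s e.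

Lemma dot_e_De (u : R) : inI a b u -> dot (e u) (vD e u) = 0.
Proof.
  intros Hu. destruct ruled as [_ [He Hunit]].
  destruct (vC3_on_vex_derive a b e u He Hu) as [De _].
  assert (H : dot (vD e u) (e u) + dot (e u) (vD e u) = 0).
  { apply (inI_const_derive0 a b (fun t => dot (e t) (e t)) 1 u); [|exact Hu|].
    - intros t Ht. apply (Hunit t Ht).
    - exact (is_derive_dot e e u De De). }
  rewrite dot_comm in H. lra.
Qed.

Lemma ex_derive_delta (u : R) : inI a b u -> ex_derive (delta s e) u.
Proof.
  intros Hu. destruct ruled as [Hs [He _]].
  destruct (vC3_on_vex_derive a b s u Hs Hu) as [_ DDs].
  destruct (vC3_on_vex_derive a b e u He Hu) as [De DDe].
  exact (ex_derive_triple (vD s) e (vD e) u DDs De DDe).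
Qed.

Lemma dot_Ds_Ds (u : R) :
  inI a b u -> dot (vD s u) (vD s u) = dot (vD s u) (e u) ^ 2 + delta s e u ^ 2.
Proof.
  intros Hu. destruct ruled as [_ [_ Hunit]]. destruct (Hunit u Hu) as [He [HDe HDsDe]].
  unfold delta. rewrite (triple_sq_orthonormal _ _ _ He HDe (dot_e_De u Hu)), HDsDe. ring.
Qed.

Lemma dot_x1_x1 (u v : R) : inI a b u ->
  dot (x1 s e u v) (x1 s e u v) = dot (vD s u) (e u) ^ 2 + delta s e u ^ 2 + v ^ 2.
Proof.
  intros Hu. destruct ruled as [_ [_ Hunit]]. destruct (Hunit u Hu) as [_ [HDe HDsDe]].
  unfold x1. rewrite dot_vadd_l, !dot_vadd_r, !dot_vscal_l, !dot_vscal_r.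
  rewrite dot_Ds_Ds, (dot_comm (vD e u) (vD s u)), HDsDe, HDe by exact Hu. ring.
Qed.

Lemma dot_e_x1 (u v : R) : inI a b u -> dot (e u) (x1 s e u v) = dot (vD s u) (e u).
Proof.
  intros Hu. unfold x1. rewrite dot_vadd_r, dot_vscal_r, dot_e_De, dot_comm by exact Hu. ring.
Qed.

Lemma dot_cross_e_x1 (u v : R) : inI a b u ->
  dot (cross (e u) (x1 s e u v)) (cross (e u) (x1 s e u v)) = delta s e u ^ 2 + v ^ 2.
Proof.
  intros Hu. destruct ruled as [_ [_ Hunit]]. destruct (Hunit u Hu) as [He _].
  rewrite dot_cross_cross, dot_x1_x1, dot_e_x1, He by exact Hu. ring.
Qed.

Lemma cot_angle_eq (u : R) :
  inI a b u -> cot_angle s e u = dot (vD s u) (e u) / Rabs (delta s e u).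
Proof.
  intros Hu. destruct ruled as [_ [_ Hunit]]. destruct (Hunit u Hu) as [He _].
  unfold cot_angle, vnorm. rewrite dot_cross_cross, dot_Ds_Ds, He by exact Hu.
  replace ((dot (vD s u) (e u) ^ 2 + delta s e u ^ 2) * 1 - dot (vD s u) (e u) ^ 2)
    with (Rsqr (delta s e u)) by (unfold Rsqr; ring).
  rewrite sqrt_Rsqr_abs. reflexivity.
Qed.

End StandardFrame.

Lemma wfun_pos (s e : R -> V3) (u v : R) : delta s e u <> 0 -> 0 < wfun s e u v.
Proof.
  intros Hd. unfold wfun. apply sqrt_lt_R0.
  assert (0 < delta s e u ^ 2) by (apply pow2_gt_0; exact Hd). nra.
Qed.

Lemma wfun_sq (s e : R -> V3) (u v : R) : wfun s e u v ^ 2 = delta s e u ^ 2 + v ^ 2.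
Proof. unfold wfun. rewrite <- Rsqr_pow2, Rsqr_sqrt; [ring | nra]. Qed.

Lemma q_2_eq (s e : R -> V3) (f g : R -> R) (u v : R) : delta s e u <> 0 ->
  q_2 s e f g u v = (g u * wfun s e u v ^ 2 - (f u + g u * v) * v) / wfun s e u v ^ 3.
Proof.
  intros Hd. pose proof (wfun_pos s e u v Hd) as Hw.
  assert (0 < delta s e u ^ 2) by (apply pow2_gt_0; exact Hd).
  unfold q_2. apply is_derive_unique. unfold qfun. unfold wfun in *.
  auto_derive.
  - cbn [pow] in *. repeat split; [nra | lra].
  - cbn [pow] in *. field. lra.
Qed.

Lemma q_1_eq (s e : R -> V3) (f g : R -> R) (u v : R) :
  delta s e u <> 0 -> ex_derive f u -> ex_derive g u -> ex_derive (delta s e) u ->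
  q_1 s e f g u v = ((Derive f u + Derive g u * v) * wfun s e u v ^ 2
     - (f u + g u * v) * delta s e u * Derive (delta s e) u) / wfun s e u v ^ 3.
Proof.
  intros Hd Df Dg Ddelta. pose proof (wfun_pos s e u v Hd) as Hw.
  assert (0 < delta s e u ^ 2) by (apply pow2_gt_0; exact Hd).
  unfold q_1. apply is_derive_unique. unfold qfun. unfold wfun in *.
  auto_derive.
  - cbn [pow] in *. repeat split; auto; [nra | lra].
  - eta_contract. cbn [pow] in *. field. lra.
Qed.

Lemma T1_eq (s e : R -> V3) (f g : R -> R) (u v : R) :
  delta s e u <> 0 -> T1 s e f g u v = g u / delta s e u.
Proof.
  intros Hd. pose proof (wfun_pos s e u v Hd).
  unfold T1. rewrite q_2_eq by exact Hd. unfold qfun. field. lra.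
Qed.

Definition T2_coef0 (s e : R -> V3) (f g : R -> R) (u : R) : R :=
  2 * delta s e u * Derive f u - Derive (delta s e) u * f u
  + 2 * g u * delta s e u ^ 2 * (kappa e u - lambda s e u).
Definition T2_coef1 (s e : R -> V3) (g : R -> R) (u : R) : R :=
  2 * delta s e u * Derive g u + Derive (delta s e) u * g u.
Definition T2_coef2 (e : R -> V3) (g : R -> R) (u : R) : R := 2 * g u * kappa e u.

Lemma T2_eq (s e : R -> V3) (f g : R -> R) (u v : R) :
  delta s e u <> 0 -> ex_derive f u -> ex_derive g u -> ex_derive (delta s e) u ->
  T2 s e f g u v =
    (T2_coef0 s e f g u + T2_coef1 s e g u * v + T2_coef2 e g u * v ^ 2)
    / (2 * delta s e u ^ 2).
Proof.
  intros Hd Df Dg Ddelta. pose proof (wfun_pos s e u v Hd). pose proof (wfun_sq s e u v).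
  unfold T2. rewrite T1_eq, q_1_eq by assumption.
  unfold qfun, T2_coef0, T2_coef1, T2_coef2.
  set (w := wfun s e u v) in *.
  (* field cannot use w^2 = delta^2 + v^2, so v^2 is rewritten in terms of w^2 *)
  replace (delta s e u ^ 2 - v ^ 2) with (2 * delta s e u ^ 2 - w ^ 2) by lra.
  replace (v ^ 2) with (w ^ 2 - delta s e u ^ 2) by lra.
  field. lra.
Qed.

Section TchebychevField.

Variables (a b : Rbar) (s e : R -> V3) (f g : R -> R).
Hypothesis ruled : standard_ruled a b s e.
Hypothesis delta_neq0 : forall u, inI a b u -> delta s e u <> 0.
Hypothesis ex_derive_fg : forall u, inI a b u -> ex_derive f u /\ ex_derive g u.

Lemma sqrt_abs_delta_pos (u : R) : inI a b u -> 0 < sqrt (Rabs (delta s e u)).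
Proof. intros Hu. apply sqrt_lt_R0, Rabs_pos_lt, delta_neq0, Hu. Qed.

Lemma sqrt_abs_delta_sq (u : R) :
  sqrt (Rabs (delta s e u)) * sqrt (Rabs (delta s e u)) = Rabs (delta s e u).
Proof. apply sqrt_sqrt, Rabs_pos. Qed.

Lemma T2_eq_in (u v : R) : inI a b u ->
  T2 s e f g u v =
    (T2_coef0 s e f g u + T2_coef1 s e g u * v + T2_coef2 e g u * v ^ 2)
    / (2 * delta s e u ^ 2).
Proof.
  intros Hu. destruct (ex_derive_fg u Hu) as [Df Dg].
  exact (T2_eq s e f g u v (delta_neq0 u Hu) Df Dg (ex_derive_delta a b s e ruled u Hu)).
Qed.

Lemma cross_Tvec_x1_eq0 (u v : R) : inI a b u ->
  cross (Tvec s e f g u v) (x1 s e u v) = vzero <->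
  T2_coef0 s e f g u + T2_coef1 s e g u * v + T2_coef2 e g u * v ^ 2 = 0.
Proof.
  intros Hu. pose proof (delta_neq0 u Hu) as Hd.
  assert (0 < delta s e u ^ 2) by (apply pow2_gt_0; exact Hd).
  assert (Hcross : dot (cross (e u) (x1 s e u v)) (cross (e u) (x1 s e u v)) <> 0).
  { rewrite (dot_cross_e_x1 a b s e ruled u v Hu). pose proof (pow2_ge_0 v). lra. }
  unfold Tvec, x2.
  rewrite cross_vadd_l, !cross_vscal_l, cross_self, vscal_vzero, vadd_vzero_l.
  rewrite (vscal_eq_vzero _ _ Hcross), T2_eq_in, Rdiv_eq0 by (auto; lra).
  reflexivity.
Qed.

Lemma dot_Tvec_x1 (u v : R) : inI a b u ->
  dot (Tvec s e f g u v) (x1 s e u v) =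
    (2 * g u * (delta s e u ^ 2 * (1 + lambda s e u ^ 2) + v ^ 2)
     + lambda s e u * (T2_coef0 s e f g u + T2_coef1 s e g u * v + T2_coef2 e g u * v ^ 2))
    / (2 * delta s e u).
Proof.
  intros Hu. pose proof (delta_neq0 u Hu) as Hd.
  unfold Tvec, x2. rewrite dot_vadd_l, !dot_vscal_l.
  rewrite (dot_x1_x1 a b s e ruled u v Hu), (dot_e_x1 a b s e ruled u v Hu).
  rewrite T1_eq, T2_eq_in by assumption.
  unfold lambda. field. exact Hd.
Qed.

Lemma T_tangential_T2_coefs_eq0 : T_tangential_ucurves s e f g a b ->
  forall u, inI a b u -> g u <> 0 ->
  T2_coef0 s e f g u = 0 /\ T2_coef1 s e g u = 0 /\ T2_coef2 e g u = 0.
Proof.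
  intros HT u Hu Hg.
  apply (quadratic_eq0_off_point _ _ _ (- f u / g u)). intros v Hv.
  apply (cross_Tvec_x1_eq0 u v Hu), HT. split; [exact Hu|].
  apply affine_neq0_off_root; assumption.
Qed.

Lemma T_orthogonal_coefs_eq0 : T_orthogonal_ucurves s e f g a b ->
  forall u, inI a b u -> g u <> 0 ->
  2 * g u * delta s e u ^ 2 * (1 + lambda s e u ^ 2) + lambda s e u * T2_coef0 s e f g u = 0
  /\ lambda s e u * T2_coef1 s e g u = 0
  /\ 2 * g u + lambda s e u * T2_coef2 e g u = 0.
Proof.
  intros HO u Hu Hg.
  apply (quadratic_eq0_off_point _ _ _ (- f u / g u)). intros v Hv.
  assert (H := HO u v (conj Hu (affine_neq0_off_root _ _ _ Hg Hv))).
  rewrite dot_Tvec_x1, Rdiv_eq0 in H by (auto; apply Rmult_integral_contrapositive; auto; lra).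
  rewrite <- H. ring.
Qed.

Lemma g_eq_div_sqrt_abs_delta (u1 : R) : inI a b u1 -> g u1 <> 0 ->
  (forall u, inI a b u -> g u <> 0 -> T2_coef1 s e g u = 0) ->
  exists c1, c1 <> 0 /\ forall u, inI a b u -> g u = c1 / sqrt (Rabs (delta s e u)).
Proof.
  intros Hu1 Hg1 Hcoef1.
  assert (Hconst : forall u u', inI a b u -> inI a b u' ->
    g u * sqrt (Rabs (delta s e u)) = g u' * sqrt (Rabs (delta s e u'))).
  { apply (inI_mul_derive0_const a b _
      (fun t => T2_coef1 s e g t * sqrt (Rabs (delta s e t)) / (2 * delta s e t))).
    - intros u Hu. apply is_derive_mul_sqrt_abs.
      + apply delta_neq0, Hu.
      + apply (ex_derive_delta a b s e ruled u Hu).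
      + apply ex_derive_fg, Hu.
    - intros u Hu. destruct (Req_dec (g u) 0) as [E|N].
      + rewrite E. ring.
      + rewrite (Hcoef1 u Hu N). unfold Rdiv. ring. }
  exists (g u1 * sqrt (Rabs (delta s e u1))). split.
  - apply Rmult_integral_contrapositive. split; [exact Hg1|].
    apply Rgt_not_eq, sqrt_abs_delta_pos, Hu1.
  - intros u Hu. pose proof (sqrt_abs_delta_pos u Hu).
    rewrite <- (Hconst u u1 Hu Hu1). field. lra.
Qed.

Lemma T2_coef1_eq0 (c1 : R) :
  (forall u, inI a b u -> g u = c1 / sqrt (Rabs (delta s e u))) ->
  forall u, inI a b u -> T2_coef1 s e g u = 0.
Proof.
  intros Hg u Hu. pose proof (sqrt_abs_delta_pos u Hu) as HS.
  pose proof (is_derive_mul_sqrt_abs (delta s e) g u (delta_neq0 u Hu)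
    (ex_derive_delta a b s e ruled u Hu) (proj2 (ex_derive_fg u Hu))) as D.
  apply (inI_const_derive0 a b _ c1 u) in D; [|intros t Ht|exact Hu].
  - apply Rdiv_eq0, Rmult_integral in D as [D|D]; [exact D|lra|].
    apply Rmult_integral_contrapositive. split; [lra|apply delta_neq0, Hu].
  - pose proof (sqrt_abs_delta_pos t Ht). rewrite Hg by exact Ht. field. lra.
Qed.

Lemma g_neq0 (c1 : R) : c1 <> 0 ->
  (forall u, inI a b u -> g u = c1 / sqrt (Rabs (delta s e u))) ->
  forall u, inI a b u -> g u <> 0.
Proof.
  intros Hc1 Hg u Hu E. pose proof (sqrt_abs_delta_pos u Hu).
  rewrite Hg, Rdiv_eq0 in E by (auto; lra). contradiction.
Qed.

Lemma is_derive_f_div_sqrt_abs_delta (u : R) : inI a b u ->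
  is_derive (fun t => f t / sqrt (Rabs (delta s e t))) u
    ((2 * delta s e u * Derive f u - Derive (delta s e) u * f u)
     / (2 * delta s e u * sqrt (Rabs (delta s e u)))).
Proof.
  intros Hu. apply is_derive_div_sqrt_abs.
  - apply delta_neq0, Hu.
  - apply (ex_derive_delta a b s e ruled u Hu).
  - apply ex_derive_fg, Hu.
Qed.

Lemma T_tangential_ucurves_conoidal (u1 : R) : inI a b u1 -> g u1 <> 0 ->
  T_tangential_ucurves s e f g a b ->
  (forall u, inI a b u -> kappa e u = 0) /\
  exists (c1 c2 : R) (L : R -> R), c1 <> 0 /\
    (forall u, inI a b u -> is_derive L u (cot_angle s e u)) /\
    (forall u, inI a b u ->
       g u = c1 / sqrt (Rabs (delta s e u)) /\
       f u = sqrt (Rabs (delta s e u)) * (c1 * L u + c2)).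
Proof.
  intros Hu1 Hg1 HT.
  pose proof (T_tangential_T2_coefs_eq0 HT) as Hcoef.
  destruct (g_eq_div_sqrt_abs_delta u1 Hu1 Hg1) as [c1 [Hc1 Hg]].
  { intros u Hu Hgu. apply Hcoef; assumption. }
  pose proof (g_neq0 c1 Hc1 Hg) as Hgu.
  assert (Hkappa : forall u, inI a b u -> kappa e u = 0).
  { intros u Hu. destruct (Hcoef u Hu (Hgu u Hu)) as [_ [_ H2]].
    unfold T2_coef2 in H2. pose proof (Hgu u Hu). nra. }
  split; [exact Hkappa|].
  exists c1, 0, (fun t => / c1 * (f t / sqrt (Rabs (delta s e t)))).
  split; [exact Hc1|]. split.
  - intros u Hu. pose proof (delta_neq0 u Hu) as Hd.
    destruct (Hcoef u Hu (Hgu u Hu)) as [H0 _].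
    unfold T2_coef0, lambda in H0. rewrite Hkappa, Hg in H0 by exact Hu.
    replace (cot_angle s e u)
      with (/ c1 * ((2 * delta s e u * Derive f u - Derive (delta s e) u * f u)
                    / (2 * delta s e u * sqrt (Rabs (delta s e u))))).
    + apply is_derive_scal, is_derive_f_div_sqrt_abs_delta, Hu.
    + rewrite (cot_angle_eq a b s e ruled u Hu).
      pose proof (sqrt_abs_delta_pos u Hu). pose proof (sqrt_abs_delta_sq u) as HS2.
      set (S := sqrt (Rabs (delta s e u))) in *. rewrite <- HS2.
      replace (2 * delta s e u * Derive f u - Derive (delta s e) u * f u)
        with (2 * (c1 / S) * delta s e u ^ 2 * (dot (vD s u) (e u) / delta s e u)) by lra.
      field. lra.
  - intros u Hu. pose proof (sqrt_abs_delta_pos u Hu).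
    split; [apply Hg, Hu|]. field. lra.
Qed.

Lemma conoidal_T_tangential_ucurves :
  (forall u, inI a b u -> kappa e u = 0) /\
  (exists (c1 c2 : R) (L : R -> R), c1 <> 0 /\
    (forall u, inI a b u -> is_derive L u (cot_angle s e u)) /\
    (forall u, inI a b u ->
       g u = c1 / sqrt (Rabs (delta s e u)) /\
       f u = sqrt (Rabs (delta s e u)) * (c1 * L u + c2))) ->
  T_tangential_ucurves s e f g a b.
Proof.
  intros [Hkappa [c1 [c2 [L [Hc1 [HL Hfg]]]]]] u v [Hu _].
  pose proof (delta_neq0 u Hu) as Hd.
  assert (Hderiv : (2 * delta s e u * Derive f u - Derive (delta s e) u * f u)
                   / (2 * delta s e u * sqrt (Rabs (delta s e u))) = c1 * cot_angle s e u).
  { rewrite <- (is_derive_unique _ _ _ (is_derive_f_div_sqrt_abs_delta u Hu)).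
    apply is_derive_unique.
    apply (is_derive_ext_loc (fun t => c1 * L t + c2)).
    - generalize (inI_locally a b u Hu). apply filter_imp. intros t Ht.
      pose proof (sqrt_abs_delta_pos t Ht). destruct (Hfg t Ht) as [_ ->].
      symmetry. apply Rmult_div_r. lra.
    - auto_derive; [exists (cot_angle s e u); apply HL, Hu|].
      eta_contract. rewrite (is_derive_unique _ _ _ (HL u Hu)). ring. }
  apply (cross_Tvec_x1_eq0 u v Hu).
  rewrite (T2_coef1_eq0 c1 (fun t Ht => proj1 (Hfg t Ht)) u Hu).
  unfold T2_coef0, T2_coef2, lambda. rewrite Hkappa, (proj1 (Hfg u Hu)) by exact Hu.
  rewrite (cot_angle_eq a b s e ruled u Hu) in Hderiv.
  pose proof (sqrt_abs_delta_pos u Hu). pose proof (sqrt_abs_delta_sq u) as HS2.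
  set (S := sqrt (Rabs (delta s e u))) in *. rewrite <- HS2 in Hderiv.
  replace (2 * delta s e u * Derive f u - Derive (delta s e) u * f u)
    with (2 * delta s e u * S * (c1 * (dot (vD s u) (e u) / (S * S)))).
  - field. lra.
  - rewrite <- Hderiv. field. lra.
Qed.

Lemma T_orthogonal_ucurves_line_of_curvature (u0 u1 : R) :
  inI a b u0 -> f u0 <> 0 -> inI a b u1 -> g u1 <> 0 ->
  T_orthogonal_ucurves s e f g a b ->
  (forall u, inI a b u -> kappa e u * lambda s e u + 1 = 0) /\
  exists c1 c2 : R, c1 <> 0 /\ c2 <> 0 /\
    (forall u, inI a b u ->
       g u = c1 / sqrt (Rabs (delta s e u)) /\
       f u = c2 * sqrt (Rabs (delta s e u))).
Proof.
  intros Hu0 Hf0 Hu1 Hg1 HO.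
  pose proof (T_orthogonal_coefs_eq0 HO) as Hcoef.
  assert (Hkl : forall u, inI a b u -> g u <> 0 -> kappa e u * lambda s e u + 1 = 0).
  { intros u Hu Hgu. destruct (Hcoef u Hu Hgu) as [_ [_ H2]]. unfold T2_coef2 in H2.
    apply (Rmult_eq_reg_l (2 * g u)); lra. }
  destruct (g_eq_div_sqrt_abs_delta u1 Hu1 Hg1) as [c1 [Hc1 Hg]].
  { intros u Hu Hgu. destruct (Hcoef u Hu Hgu) as [_ [H1 _]].
    apply Rmult_integral in H1 as [Hl|]; [|assumption].
    specialize (Hkl u Hu Hgu). rewrite Hl in Hkl. lra. }
  pose proof (g_neq0 c1 Hc1 Hg) as Hgu.
  assert (Hf_const : forall u, inI a b u ->
    f u / sqrt (Rabs (delta s e u)) = f u0 / sqrt (Rabs (delta s e u0))).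
  { intros u Hu. apply (inI_derive0_const a b (fun t => f t / sqrt (Rabs (delta s e t))));
      [intros t Ht | exact Hu | exact Hu0].
    pose proof (is_derive_f_div_sqrt_abs_delta t Ht) as D.
    destruct (Hcoef t Ht (Hgu t Ht)) as [H0 _]. specialize (Hkl t Ht (Hgu t Ht)).
    unfold T2_coef0 in H0.
    (* with kappa lambda = -1 the constant coefficient reduces to lambda (2 delta f' - delta' f) *)
    replace 0 with ((2 * delta s e t * Derive f t - Derive (delta s e) t * f t)
                    / (2 * delta s e t * sqrt (Rabs (delta s e t)))); [exact D|].
    apply Rdiv_eq0.
    - pose proof (sqrt_abs_delta_pos t Ht). pose proof (delta_neq0 t Ht).
      apply Rmult_integral_contrapositive; split; [|lra].
      apply Rmult_integral_contrapositive; split; [lra | assumption].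
    - assert (Hl : lambda s e t <> 0) by (intro E; rewrite E in Hkl; lra).
      apply (Rmult_eq_reg_l (lambda s e t)); [|exact Hl]. rewrite Rmult_0_r, <- H0.
      assert (E : 2 * g t * delta s e t ^ 2 * (kappa e t * lambda s e t + 1) = 0)
        by (rewrite Hkl; ring).
      lra. }
  split; [intros u Hu; apply Hkl, Hgu; exact Hu|].
  exists c1, (f u0 / sqrt (Rabs (delta s e u0))).
  pose proof (sqrt_abs_delta_pos u0 Hu0).
  split; [exact Hc1|]. split.
  - intro E. apply Rdiv_eq0 in E; lra.
  - intros u Hu. pose proof (sqrt_abs_delta_pos u Hu).
    split; [apply Hg, Hu|]. rewrite <- (Hf_const u Hu). field. lra.
Qed.

Lemma line_of_curvature_T_orthogonal_ucurves :
  (forall u, inI a b u -> kappa e u * lambda s e u + 1 = 0) /\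
  (exists c1 c2 : R, c1 <> 0 /\ c2 <> 0 /\
    (forall u, inI a b u ->
       g u = c1 / sqrt (Rabs (delta s e u)) /\
       f u = c2 * sqrt (Rabs (delta s e u)))) ->
  T_orthogonal_ucurves s e f g a b.
Proof.
  intros [Hkl [c1 [c2 [Hc1 [Hc2 Hfg]]]]] u v [Hu _].
  pose proof (delta_neq0 u Hu) as Hd. pose proof (sqrt_abs_delta_pos u Hu).
  pose proof (is_derive_f_div_sqrt_abs_delta u Hu) as D.
  apply (inI_const_derive0 a b _ c2 u) in D; [|intros t Ht|exact Hu].
  - apply Rdiv_eq0 in D.
    + rewrite dot_Tvec_x1, (T2_coef1_eq0 c1 (fun t Ht => proj1 (Hfg t Ht)) u Hu) by exact Hu.
      unfold T2_coef0, T2_coef2. rewrite D.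
      replace (2 * g u * (delta s e u ^ 2 * (1 + lambda s e u ^ 2) + v ^ 2) +
        lambda s e u * (0 + 2 * g u * delta s e u ^ 2 * (kappa e u - lambda s e u) + 0 * v +
                        2 * g u * kappa e u * v ^ 2))
        with (2 * g u * (delta s e u ^ 2 + v ^ 2) * (kappa e u * lambda s e u + 1)) by ring.
      rewrite (Hkl u Hu). unfold Rdiv. ring.
    + apply Rmult_integral_contrapositive; split; [|lra].
      apply Rmult_integral_contrapositive; split; [lra | exact Hd].
  - pose proof (sqrt_abs_delta_pos t Ht). rewrite (proj2 (Hfg t Ht)). field. lra.
Qed.

End TchebychevField.

Theorem proposition5 (a b : Rbar) (s e : R -> V3) (f g : R -> R) :
  Rbar_lt a b ->
  standard_ruled a b s e ->
  (forall u, inI a b u -> delta s e u <> 0) ->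
  (forall u, inI a b u -> ex_derive f u /\ ex_derive g u) ->
  (exists u, inI a b u /\ f u <> 0) ->
  (exists u, inI a b u /\ g u <> 0) ->
  (T_tangential_ucurves s e f g a b <->
     (forall u, inI a b u -> kappa e u = 0) /\
     exists (c1 c2 : R) (L : R -> R), c1 <> 0 /\
       (forall u, inI a b u -> is_derive L u (cot_angle s e u)) /\
       (forall u, inI a b u ->
          g u = c1 / sqrt (Rabs (delta s e u)) /\
          f u = sqrt (Rabs (delta s e u)) * (c1 * L u + c2)))
  /\
  (T_orthogonal_ucurves s e f g a b <->
     (forall u, inI a b u -> kappa e u * lambda s e u + 1 = 0) /\
     exists c1 c2 : R, c1 <> 0 /\ c2 <> 0 /\
       (forall u, inI a b u ->
          g u = c1 / sqrt (Rabs (delta s e u)) /\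
          f u = c2 * sqrt (Rabs (delta s e u)))).
Proof.
  intros _ Hruled Hdelta Hfg [u0 [Hu0 Hf0]] [u1 [Hu1 Hg1]].
  split; split.
  - exact (T_tangential_ucurves_conoidal a b s e f g Hruled Hdelta Hfg u1 Hu1 Hg1).
  - exact (conoidal_T_tangential_ucurves a b s e f g Hruled Hdelta Hfg).
  - exact (T_orthogonal_ucurves_line_of_curvature a b s e f g Hruled Hdelta Hfg
             u0 u1 Hu0 Hf0 Hu1 Hg1).
  - exact (line_of_curvature_T_orthogonal_ucurves a b s e f g Hruled Hdelta Hfg).
Qed.
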